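(* Let $M$ be a commutative monoid. Every nonempty irreducible closed subset $Y$ of the terminal space $\mathcal S(M)$ has a unique generic point, i.e. there is a unique $I\in Y$ with $Y=\overline{\{I\}}$.
   Context: A monoid is a commutative monoid $(M,\cdot,1)$. An ideal of $M$ is a subset $I\subseteq M$ such that $im\in I$ for all $i\in I$, $m\in M$; it is proper if $I\neq M$. A proper ideal $K$ of $M$ is strongly irreducible if for all ideals $I,J$ of $M$, $I\cap J\subseteq K$ implies $I\subseteq K$ or $J\subseteq K$. $\mathcal S(M)$ is the set of all strongly irreducible ideals of $M$. For $X\subseteq\mathcal S(M)$, $\mathcal K(X)=\bigcap_{I\in X}I$, and $\mathcal{HK}(X)=\{J\in\mathcal S(M)\mid J\supseteq\mathcal K(X)\}$ if $X\neq\emptyset$, $\mathcal{HK}(\emptyset)=\emptyset$. The terminal space of $M$ is the set $\mathcal S(M)$ with the topology whose closed sets are exactly the sets $\mathcal{HK}(X)$, $X\subseteq\mathcal S(M)$. A subset $Y$ of a topological space is irreducible if whenever $Y\subseteq Y_1\cup Y_2$ with $Y_1,Y_2$ closed, then $Y\subseteq Y_1$ or $Y\subseteq Y_2$. *)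

From mathcomp Require Import all_boot.
From mathcomp Require Import boolp classical_sets.
Set Implicit Arguments. Unset Strict Implicit. Unset Printing Implicit Defensive.
Local Open Scope classical_set_scope.

Record comMonoid := ComMonoid {
  mcarrier :> Type;
  mmul : mcarrier -> mcarrier -> mcarrier;
  mone : mcarrier;
  mmulA : forall x y z, mmul x (mmul y z) = mmul (mmul x y) z;
  mmulC : forall x y, mmul x y = mmul y x;
  mmul1 : forall x, mmul mone x = x
}.

Section Terminal.
Variable M : comMonoid.

Definition ideal (I : set M) : Prop :=
  forall i m, I i -> I (mmul i m).

Definition strongly_irreducible (K : set M) : Prop :=
  [/\ ideal K, K <> setT &
      forall I J : set M, ideal I -> ideal J ->
        I `&` J `<=` K -> I `<=` K \/ J `<=` K].

Definition SM : set (set M) := [set K | strongly_irreducible K].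

Definition KK (X : set (set M)) : set M := \bigcap_(I in X) I.

Definition HK (X : set (set M)) : set (set M) :=
  [set J | X <> set0 /\ SM J /\ KK X `<=` J].

Definition ts_closed (F : set (set M)) : Prop :=
  exists X, X `<=` SM /\ F = HK X.

Definition ts_closure (A : set (set M)) : set (set M) :=
  [set J | forall F, ts_closed F -> A `<=` F -> F J].

Definition ts_irreducible (Y : set (set M)) : Prop :=
  forall Y1 Y2, ts_closed Y1 -> ts_closed Y2 ->
    Y `<=` Y1 `|` Y2 -> Y `<=` Y1 \/ Y `<=` Y2.

End Terminal.

From mathcomp Require Import all_boot.
From mathcomp Require Import boolp classical_sets.
Local Open Scope classical_set_scope.

(* Write Y = HK X with X a nonempty family of strongly irreducible ideals and
   K := KK X the intersection of X.  Two descriptions drive the proof: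
   - for nonempty X, HK X = {J in S(M) | K <= J}, and for a point I of S(M)
     the closure of {I} is {J in S(M) | I <= J};
   - if HK X is irreducible, then K is itself strongly irreducible: given
     ideals A, B with A `&` B <= K, every member of X contains A or B, so X
     splits as X1 ∪ X2 and HK X is covered by the closed sets HK X1, HK X2;
     irreducibility puts HK X inside one of them, and then A <= K or B <= K.
   Hence K lies in Y and its closure is Y, so K is a generic point; it is
   unique because the terminal space is T0 (closures of points determine the
   points, since I lies in the closure of {J} iff J <= I). *)

Section TerminalSpace.
Context {M : comMonoid}.
Implicit Types (X : set (set M)) (A B I J K : set M).

Lemma KK_ideal X : (forall J, X J -> ideal J) -> ideal (KK X).
Proof. by move=> Xid i m Ki J XJ; apply: Xid => //; apply: Ki. Qed.

Lemma SM_ideal J : SM J -> ideal J.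
Proof. by case. Qed.

Lemma KK_sub {X J} : X J -> KK X `<=` J.
Proof. exact: bigcap_inf. Qed.

Lemma HK_closed {X} : X `<=` @SM M -> ts_closed (HK X).
Proof. by move=> XS; exists X. Qed.

Lemma HKE X : X <> set0 -> HK X = [set J | SM J /\ KK X `<=` J].
Proof.
move=> Xne; apply/seteqP; split => J; first by case.
by move=> JK; split.
Qed.

Lemma sub_HK {X} : X <> set0 -> X `<=` @SM M -> X `<=` HK X.
Proof. by move=> Xne XS J XJ; rewrite HKE //; split; [exact: XS|exact: KK_sub]. Qed.

Lemma closure_point {I} :
  SM I -> ts_closure [set I] = [set J | SM J /\ I `<=` J].
Proof.
have KK1 : KK [set I] = I by exact: bigcap_set1.
have ne1 : [set I] <> set0 by move=> /seteqP[/(_ I erefl)].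
move=> SI; apply/seteqP; split => J.
  have IS : [set I] `<=` @SM M by move=> _ ->.
  move=> clJ; have := clJ (HK [set I]) (HK_closed IS) (sub_HK ne1 IS).
  by rewrite HKE // KK1.
move=> [SJ IJ] _ [Z [ZS ->]] IZ.
have [Zne [_ ZI]] := IZ I erefl.
by rewrite HKE //; split => //; apply: subset_trans IJ.
Qed.

Lemma closure_point_inj I J :
  SM I -> SM J -> ts_closure [set I] = ts_closure [set J] -> I = J.
Proof.
move=> SI SJ clIJ; have clI := closure_point SI; have clJ := closure_point SJ.
have [_ JI] : [set K | SM K /\ J `<=` K] I by rewrite -clJ -clIJ clI; split.
have [_ IJ] : [set K | SM K /\ I `<=` K] J by rewrite -clI clIJ clJ; split.
by apply/seteqP; split.
Qed.

Lemma HK_cover {X X1 X2} :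
  X1 `<=` @SM M -> X2 `<=` @SM M -> X1 <> set0 -> X2 <> set0 ->
  X `<=` X1 `|` X2 -> HK X `<=` HK X1 `|` HK X2.
Proof.
move=> X1S X2S X1ne X2ne X12 J [_ [SMJ KJ]]; have [_ _ SJ] := SMJ.
have id1 : ideal (KK X1) by apply: KK_ideal => J' /X1S /SM_ideal.
have id2 : ideal (KK X2) by apply: KK_ideal => J' /X2S /SM_ideal.
have KK12 : KK X1 `&` KK X2 `<=` J.
  move=> x [x1 x2]; apply: KJ => J' XJ'.
  by case: (X12 J' XJ') => ?; [apply: x1|apply: x2].
by case: (SJ _ _ id1 id2 KK12) => ?; [left|right]; split.
Qed.

Lemma HK_sub_above {X} C : X <> set0 -> X `<=` @SM M ->
  HK X `<=` HK [set J | X J /\ C `<=` J] -> C `<=` KK X.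
Proof.
move=> Xne XS XC; apply: sub_bigcap => J XJ.
have [_ [_ KJ]] := XC J (sub_HK Xne XS J XJ).
by apply: subset_trans KJ; apply: sub_bigcap => J' [].
Qed.

Lemma KK_strongly_irreducible {X} :
  X <> set0 -> X `<=` @SM M -> ts_irreducible (HK X) -> SM (KK X).
Proof.
move=> Xne XS Xirr; split.
- by apply: KK_ideal => J /XS /SM_ideal.
- have [J XJ] : X !=set0 by apply/set0P/eqP.
  have [_ JT _] := XS J XJ; move=> KT; apply: JT.
  by apply/seteqP; split => // x _; apply: (KK_sub XJ); rewrite KT.
move=> A B idA idB AB.
have XAB J : X J -> A `<=` J \/ B `<=` J.
  move=> XJ; have [_ _ SJ] := XS J XJ.
  by apply: SJ => //; apply: subset_trans AB (KK_sub XJ).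
pose X1 := [set J | X J /\ A `<=` J]; pose X2 := [set J | X J /\ B `<=` J].
have [X1e|X1ne] := pselect (X1 = set0).
  right; apply: sub_bigcap => J XJ; case: (XAB J XJ) => // AJ.
  by have : X1 J by []; rewrite X1e.
have [X2e|X2ne] := pselect (X2 = set0).
  left; apply: sub_bigcap => J XJ; case: (XAB J XJ) => // BJ.
  by have : X2 J by []; rewrite X2e.
have X1S : X1 `<=` @SM M by move=> J [/XS].
have X2S : X2 `<=` @SM M by move=> J [/XS].
have X12 : X `<=` X1 `|` X2 by move=> J XJ; case: (XAB J XJ); [left|right].
case: (Xirr _ _ (HK_closed X1S) (HK_closed X2S) (HK_cover X1S X2S X1ne X2ne X12)).
  by left; exact: HK_sub_above.
by right; exact: HK_sub_above.
Qed.

End TerminalSpace.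

Theorem corollary2p7 (M : comMonoid) (Y : set (set M)) :
  ts_closed Y -> Y <> set0 -> ts_irreducible Y ->
  exists! I : set M, Y I /\ Y = ts_closure [set I].
Proof.
move=> [X [XS ->]] Yne Yirr.
have Xne : X <> set0 by move=> X0; apply: Yne; apply/seteqP; split => // J [].
have SK := KK_strongly_irreducible Xne XS Yirr.
have YE : HK X = ts_closure [set KK X] by rewrite closure_point // HKE.
have YK : HK X (KK X) by rewrite HKE //; split.
exists (KK X); split => //.
move=> I [YI clI]; have [_ [SI _]] := YI.
by apply: closure_point_inj => //; rewrite -clI.
Qed.
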